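(* If $P$ is an $n\times n$ sign pattern all of whose entries are nonzero (i.e., $+$ or $-$) and $\mathcal{Q}(P)$ contains a nilpotent matrix, then $P$ is a spectrally arbitrary pattern.
   Context: A sign pattern is an array with entries in $\{+,-,0\}$; its qualitative class $\mathcal{Q}(P)$ is the set of real matrices of the same size whose entries have the signs prescribed by $P$. An $n\times n$ sign pattern $P$ is spectrally arbitrary if for every monic real polynomial $p$ of degree $n$ there is $A\in\mathcal{Q}(P)$ with characteristic polynomial $p$. *)

From HB Require Import structures.
From mathcomp Require Import all_boot all_order all_algebra.
From mathcomp Require Import all_classical all_reals.
Set Implicit Arguments. Unset Strict Implicit. Unset Printing Implicit Defensive.
Import Order.TTheory GRing.Theory Num.Theory.
Local Open Scope ring_scope.

Inductive sign := Pos | Neg | Zero.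

Definition has_sign (R : realType) (s : sign) (x : R) : Prop :=
  match s with Pos => 0 < x | Neg => x < 0 | Zero => x = 0 end.

Definition sign_pattern (n : nat) := 'I_n -> 'I_n -> sign.

Definition qual_class (R : realType) (n : nat) (P : sign_pattern n) (A : 'M[R]_n) : Prop :=
  forall i j, has_sign (P i j) (A i j).

Definition nowhere_zero (n : nat) (P : sign_pattern n) : Prop :=
  forall i j, P i j <> Zero.

Definition nilpotent_mx (R : realType) (n : nat) (A : 'M[R]_n) : Prop :=
  exists k : nat, A ^+ k = 0.

Definition spectrally_arbitrary (R : realType) (n : nat) (P : sign_pattern n) : Prop :=
  forall p : {poly R}, p \is monic -> size p = n.+1 ->
    exists A : 'M[R]_n, qual_class P A /\ char_poly A = p.

From HB Require Import structures.
From mathcomp Require Import all_boot all_order all_algebra.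
From mathcomp Require Import all_classical all_reals.
From mathcomp Require Import ring lra zify.
Import Order.TTheory GRing.Theory Num.Theory.
Local Open Scope ring_scope.
Set Implicit Arguments. Unset Strict Implicit. Unset Printing Implicit Defensive.

(* A nilpotent matrix A is similar to a strictly upper triangular U.  For small
   t > 0, U + t J (J the nilpotent Jordan block) is strictly upper triangular
   with nonzero superdiagonal, hence similar to J; the corresponding small
   perturbation of A stays in Q(P), which is open since P has no zero entry.
   So Q(P) contains some W J W^-1.  Given a monic p of degree n, conjugating
   its companion matrix C by D = diag(1, e, ..., e^(n-1)) and scaling by e
   lands within O(e) of J, so e W D C D^-1 W^-1 lies in Q(P) for small e > 0;
   since Q(P) is a cone, so does W D C D^-1 W^-1, whose characteristic
   polynomial is p. *)

Section MatrixNorm.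
Variable R : numDomainType.

Definition mxnorm m n (M : 'M[R]_(m, n)) : R := \sum_i \sum_j `|M i j|.

Lemma mxnorm_ge0 m n (M : 'M[R]_(m, n)) : 0 <= mxnorm M.
Proof. by apply: sumr_ge0 => i _; apply: sumr_ge0. Qed.

Lemma ler_rowsum_mxnorm m n (M : 'M[R]_(m, n)) i : \sum_j `|M i j| <= mxnorm M.
Proof.
by rewrite /mxnorm (bigD1 i) //= lerDl; apply: sumr_ge0 => k _; apply: sumr_ge0.
Qed.

Lemma ler_entry_mxnorm m n (M : 'M[R]_(m, n)) i j : `|M i j| <= mxnorm M.
Proof.
apply: le_trans (ler_rowsum_mxnorm M i).
by rewrite (bigD1 j) //= lerDl; apply: sumr_ge0.
Qed.

Lemma ler_mxnorm m n (M N : 'M[R]_(m, n)) :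
  (forall i j, `|M i j| <= `|N i j|) -> mxnorm M <= mxnorm N.
Proof. by move=> MN; apply: ler_sum => i _; apply: ler_sum. Qed.

Lemma mxnormZ m n a (M : 'M[R]_(m, n)) : mxnorm (a *: M) = `|a| * mxnorm M.
Proof.
rewrite /mxnorm mulr_sumr; apply: eq_bigr => i _.
by rewrite mulr_sumr; apply: eq_bigr => j _; rewrite mxE normrM.
Qed.

Lemma mxnorm_mulmx m n p (M : 'M[R]_(m, n)) (N : 'M[R]_(n, p)) :
  mxnorm (M *m N) <= mxnorm M * mxnorm N.
Proof.
rewrite /mxnorm mulr_suml; apply: ler_sum => i _.
apply: (@le_trans _ _ (\sum_j \sum_k `|M i k| * `|N k j|)).
  apply: ler_sum => j _; rewrite mxE; apply: (le_trans (ler_norm_sum _ _ _)).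
  by apply: ler_sum => k _; rewrite normrM.
rewrite exchange_big /= mulr_suml; apply: ler_sum => k _.
by rewrite -mulr_sumr ler_wpM2l ?ler_rowsum_mxnorm.
Qed.

End MatrixNorm.

Lemma exists_small_pos (R : realFieldType) (a b K : R) :
  0 < a -> 0 < b -> 0 <= K -> exists t, [/\ 0 < t, t < a & t * K < b].
Proof.
move=> a0 b0 K0; pose c := b / (K + 1).
have c0 : 0 < c by rewrite divr_gt0 // ltr_pwDr.
have cK : c * K < b.
  by rewrite /c mulrAC ltr_pdivrMr ?ltr_pwDr // ltr_pM2l //= ltrDl.
have min_a : Num.min a c <= a by rewrite ge_min lexx.
have min_c : Num.min a c <= c by rewrite ge_min lexx orbT.
exists (Num.min a c / 2); split.
- by rewrite divr_gt0 // lt_min a0.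
- by rewrite ltr_pdivrMr // (le_lt_trans min_a) // ltr_pMr //= ltr1n.
- apply: le_lt_trans cK; apply: ler_wpM2r => //.
  by rewrite ler_pdivrMr // (le_trans min_c) // ler_peMr ?ltW ?ltr1n.
Qed.

Lemma nonzero_norm_lbound (R : realFieldType) (I : finType) (f : I -> R) :
  exists2 m : R, 0 < m & forall i, f i != 0 -> m <= `|f i|.
Proof.
pose s := \sum_i `|f i|^-1.
have s0 : 0 <= s by apply: sumr_ge0 => i _; rewrite invr_ge0.
exists (1 + s)^-1 => [|i fi0]; first by rewrite invr_gt0 ltr_pwDl.
have fi_gt0 : 0 < `|f i| by rewrite normr_gt0.
rewrite -[`|f i|]invrK lef_pV2 ?posrE ?invr_gt0 ?ltr_pwDl //.
rewrite /s (bigD1 i) //= addrCA lerDl addr_ge0 //.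
by apply: sumr_ge0 => j _; rewrite invr_ge0.
Qed.

Lemma has_signZ (R : realType) s (a x : R) :
  0 < a -> has_sign s x -> has_sign s (a * x).
Proof.
by move=> a0; case: s => /= [x0|x0|->]; rewrite ?mulr0 ?pmulr_rgt0 ?pmulr_rlt0.
Qed.

Lemma has_sign_near (R : realType) s (x y : R) :
  s <> Zero -> has_sign s x -> `|y - x| < `|x| -> has_sign s y.
Proof.
move=> nz; have := ler_norm (y - x); have := ler_norm (x - y); rewrite distrC.
by case: s nz => //= _ + + hx; [rewrite (gtr0_norm hx) | rewrite (ltr0_norm hx)]; lra.
Qed.

Lemma qual_classZ (R : realType) n (P : sign_pattern n) (a : R) (A : 'M[R]_n) :
  0 < a -> qual_class P A -> qual_class P (a *: A).
Proof. by move=> a0 qA i j; rewrite mxE; apply: has_signZ. Qed.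

Lemma qual_class_open (R : realType) n (P : sign_pattern n) (A : 'M[R]_n) :
  nowhere_zero P -> qual_class P A ->
  exists2 d : R, 0 < d & forall B, mxnorm (B - A) < d -> qual_class P B.
Proof.
move=> nzP qA; have [d d0 Hd] := nonzero_norm_lbound (fun ij => A ij.1 ij.2).
exists d => // B dBA i j; apply: has_sign_near (nzP i j) (qA i j) _.
have Aij0 : A i j != 0.
  by move: (qA i j) (nzP i j); case: (P i j) => //= [/gt_eqF|/lt_eqF] ->.
apply: lt_le_trans (Hd (i, j) Aij0); apply: le_lt_trans dBA.
by have := ler_entry_mxnorm (B - A) i j; rewrite !mxE.
Qed.

Section Similarity.
Variable F : fieldType.

Lemma conjmxX n (V A : 'M[F]_n) k :
  V \in unitmx -> conjmx V (A ^+ k) = conjmx V A ^+ k.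
Proof.
move=> Vu; elim: k => [|k IHk]; first by rewrite !expr0 conjmx_scalar ?row_free_unit.
by rewrite !exprS -!mulmxE conjmxM ?inE ?stablemx_unit // IHk.
Qed.

Lemma conjmxD n (V A B : 'M[F]_n) : conjmx V (A + B) = conjmx V A + conjmx V B.
Proof. by rewrite /conjmx mulmxDr mulmxDl. Qed.

Lemma conjmxZ n (V A : 'M[F]_n) a : conjmx V (a *: A) = a *: conjmx V A.
Proof. by rewrite /conjmx -scalemxAr -scalemxAl. Qed.

Lemma conjmxB n (V A B : 'M[F]_n) : conjmx V (A - B) = conjmx V A - conjmx V B.
Proof. by rewrite /conjmx mulmxBr mulmxBl. Qed.

Lemma char_poly_conjmx n (V A : 'M[F]_n) :
  V \in unitmx -> char_poly (conjmx V A) = char_poly A.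
Proof.
move=> Vu; rewrite conjumx // /char_poly /char_poly_mx.
have -> : 'X%:M - map_mx polyC (V *m A *m invmx V) =
    map_mx polyC V *m ('X%:M - map_mx polyC A) *m map_mx polyC (invmx V).
  rewrite mulmxBr mulmxBl !map_mxM scalar_mxC -mulmxA.
  by rewrite -[in RHS]mulmxA -(map_mxM _ V) mulmxV // map_mx1 mulmx1 !mulmxA.
by rewrite !det_mulmx mulrC mulrA -det_mulmx -map_mxM mulVmx // map_mx1 det1 mul1r.
Qed.

Lemma conjmx_diag n (d : 'rV[F]_n) (A : 'M[F]_n) : (forall i, d 0 i != 0) ->
  conjmx (diag_mx d) A = \matrix_(i, j) (d 0 i * A i j / d 0 j).
Proof.
move=> d0; have Du : diag_mx d \in unitmx.
  by rewrite unitmxE det_diag unitfE; apply/prodf_neq0 => i _.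
rewrite conjumx //; have -> : invmx (diag_mx d) = diag_mx (\row_j (d 0 j)^-1).
  have DDi : diag_mx d *m diag_mx (\row_j (d 0 j)^-1) = 1%:M.
    rewrite mul_diag_mx; apply/matrixP => i j; rewrite !mxE.
    by case: eqVneq => [->|]; rewrite ?mulr0n ?mulr0 // mulr1n mulfV.
  by rewrite -[LHS]mulmx1 -DDi mulKmx.
by rewrite mul_diag_mx mul_mx_diag; apply/matrixP => i j; rewrite !mxE.
Qed.

End Similarity.

Lemma mxnorm_conjmx (F : numFieldType) n (V A : 'M[F]_n) : V \in unitmx ->
  mxnorm (conjmx V A) <= mxnorm V * mxnorm A * mxnorm (invmx V).
Proof.
move=> Vu; rewrite conjumx //; apply: le_trans (mxnorm_mulmx _ _) _.
by rewrite ler_wpM2r ?mxnorm_ge0 ?mxnorm_mulmx.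
Qed.

Definition strictly_upper (R : nzRingType) n (A : 'M[R]_n) : Prop :=
  forall i j : 'I_n, (j <= i)%N -> A i j = 0.

Lemma strictly_upper_block (R : nzRingType) m n (Aul : 'M[R]_m) (Aur : 'M[R]_(m, n))
    (Adr : 'M[R]_n) :
  strictly_upper Aul -> strictly_upper Adr ->
  strictly_upper (block_mx Aul Aur 0 Adr : 'M_(m + n)).
Proof.
move=> Ul Ur i j; rewrite -[i]splitK -[j]splitK.
case: (fintype.split i) => i'; case: (fintype.split j) => j' /= le_ji.
- by rewrite block_mxEul Ul.
- by have := ltn_ord i'; lia.
- by rewrite block_mxEdl mxE.
- by rewrite block_mxEdr Ur // -(leq_add2l m).
Qed.

Lemma exp_ublock_mx (R : nzRingType) m n (Aul : 'M[R]_m) (Aur : 'M[R]_(m, n))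
    (Adr : 'M[R]_n) k :
  exists Bur, (block_mx Aul Aur 0 Adr : 'M_(m + n)) ^+ k
              = block_mx (Aul ^+ k) Bur 0 (Adr ^+ k).
Proof.
elim: k => [|k [Bur IHk]]; first by exists 0; rewrite !expr0 -scalar_mx_block.
exists (Aul ^+ k *m Aur + Bur *m Adr).
by rewrite !exprSr -!mulmxE IHk mulmx_block !mulmx0 !mul0mx !addr0 !add0r.
Qed.

Section Triangularization.
Variable F : fieldType.

Lemma detX n (A : 'M[F]_n) k : \det (A ^+ k) = \det A ^+ k.
Proof.
elim: k => [|k IHk]; first by rewrite !expr0 det1.
by rewrite !exprS -mulmxE det_mulmx IHk.
Qed.

Lemma det_nilpotent n (A : 'M[F]_n.+1) k : A ^+ k = 0 -> \det A = 0.
Proof.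
case: k => [/matrixP/(_ 0 0)/eqP|k Ak0]; first by rewrite !mxE oner_eq0.
by apply/eqP; move: (expf_eq0 (\det A) k.+1); rewrite -detX Ak0 det0 eqxx.
Qed.

Lemma unitmx_col0 n (v : 'cV[F]_n.+1) : v != 0 ->
  exists2 W : 'M[F]_n.+1, W \in unitmx & col 0 W = v.
Proof.
move=> v0; pose e0 : 'rV[F]_n.+1 := delta_mx 0 0.
pose f : 'M[F]_n.+1 := \matrix_(i, j) ((i == 0)%:R * v j 0).
have e0f : e0 *m f = v^T.
  apply/rowP => j; rewrite /e0 /f !mxE (bigD1 0) //= big1 ?addr0.
    by rewrite !mxE eqxx /= !mul1r.
  by move=> i /negbTE i0; rewrite !mxE i0 andbF mul0r.
have [|g gu e0g] := @complete_unitmx _ _ _ e0 f.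
  by rewrite e0f mxrank_delta rank_rV trmx_eq0 v0.
exists g^T; first by rewrite unitmx_tr.
by rewrite -tr_row rowE -e0g e0f trmxK.
Qed.

Lemma nilpotent_strictly_upper n (A : 'M[F]_n) k : A ^+ k = 0 ->
  exists2 V : 'M[F]_n, V \in unitmx & strictly_upper (conjmx V A).
Proof.
elim: n A => [|n IHn] A Ak0; first by exists 1%:M => [|[]]; rewrite ?unitmx1.
have [v v0 Av] : exists2 v : 'cV[F]_n.+1, v != 0 & A *m v = 0.
  have /det0P[w w0 wA] : \det A^T == 0 by rewrite det_tr (det_nilpotent Ak0).
  by exists w^T; rewrite ?trmx_eq0 // -[A]trmxK -trmx_mul wA trmx0.
have [W Wu W0] := unitmx_col0 v0.
move: A Ak0 Av W Wu W0; rewrite -[n.+1]/(1 + n)%N => A Ak0 Av W Wu W0.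
have [B defB] : {B | B = conjmx (invmx W) A} by exists (conjmx (invmx W) A).
have B0 : col 0 B = 0 by rewrite defB conjVmx // colE -!mulmxA -colE W0 Av mulmx0.
have ublockB : B = block_mx 0 (ursubmx B) 0 (drsubmx B).
  have Bi0 i : B i (lshift n 0) = 0.
    have -> : lshift n 0 = 0 :> 'I_(1 + n) by apply/val_inj.
    by have /colP/(_ i) := B0; rewrite !mxE.
  rewrite -[B in LHS]submxK; congr block_mx; apply/matrixP => i j;
    by rewrite !mxE (ord1 j) Bi0.
have A'k0 : drsubmx B ^+ k = 0.
  have [Bur] := exp_ublock_mx (0 : 'M_1) (ursubmx B) (drsubmx B) k.
  rewrite -ublockB defB -conjmxX ?unitmx_inv // Ak0 conjmx0 => /(congr1 drsubmx).
  by rewrite block_mxKdr => <-; apply/matrixP => i j; rewrite !mxE.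
have [V' V'u V'A'] := IHn _ A'k0.
pose blk := block_mx (1%:M : 'M_1) 0 0 V'.
have blk_u : blk \in unitmx by rewrite block_diag_mx_unit unitmx1.
exists (blk *m invmx W); first by rewrite unitmx_mul unitmx_inv Wu blk_u.
rewrite conjuMumx ?unitmx_inv // -defB ublockB conjumx // /blk invmx_block_diag // invmx1.
rewrite !mulmx_block !(mulmx0, mul0mx, addr0, add0r, mul1mx, mulmx1) -conjumx //.
by apply: strictly_upper_block => // i j _; rewrite mxE.
Qed.

End Triangularization.

Definition shift_mx {R : nzRingType} n : 'M[R]_n := \matrix_(i, j) (i.+1 == j)%:R.

Section ShiftSimilarity.
Variables (F : fieldType) (n : nat) (G : 'M[F]_n.+1).
Hypothesis G_upper : strictly_upper G.
Hypothesis G_superdiag : forall i j : 'I_n.+1, i.+1 = j -> G i j != 0.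

Lemma row0_exp_strictly_upper m :
  (forall j : 'I_n.+1, (j < m)%N -> (G ^+ m) 0 j = 0) /\
  (forall j : 'I_n.+1, j = m :> nat -> (G ^+ m) 0 j != 0).
Proof.
elim: m => [|m [IH1 IH2]].
  by split=> // j j0; rewrite expr0 mxE (_ : 0 == j) ?oner_eq0 //; apply/eqP/val_inj.
split=> j jm; rewrite exprSr -mulmxE mxE.
  apply: big1 => c _; case: (ltnP c m) => cm; first by rewrite IH1 // mul0r.
  by rewrite G_upper ?mulr0 //; lia.
have m_lt : (m < n.+1)%N by have := ltn_ord j; lia.
rewrite (bigD1 (Ordinal m_lt)) //= big1 ?addr0.
  by rewrite mulf_neq0 ?IH2 ?G_superdiag.
move=> c cm; case: (ltnP c m) => cm'; first by rewrite IH1 // mul0r.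
have cm_val : val c != m by apply: contraNneq cm => e; apply/eqP/val_inj.
by rewrite G_upper ?mulr0 // jm ltn_neqAle eq_sym cm_val.
Qed.

(* The Krylov matrix with rows e_0 G^i is triangular with nonzero diagonal and
   satisfies X G = J X. *)
Lemma strictly_upper_similar_shift_succ :
  exists2 X : 'M[F]_n.+1, X \in unitmx & conjmx X G = shift_mx n.+1.
Proof.
have GP := row0_exp_strictly_upper.
pose X : 'M[F]_n.+1 := \matrix_(i, j) (G ^+ i) 0 j.
have Xu : X \in unitmx.
  rewrite unitmxE unitfE -det_tr det_trig.
    by apply/prodf_neq0 => i _; rewrite !mxE (GP i).2.
  by apply/is_trig_mxP => i j ij; rewrite !mxE (GP j).1.
have XG : X *m G = shift_mx n.+1 *m X.
  apply/matrixP => i j; rewrite !mxE.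
  have -> : \sum_k X i k * G k j = (G ^+ i.+1) 0 j.
    by rewrite exprSr -mulmxE mxE; apply: eq_bigr => k _; rewrite mxE.
  case: (ltnP i.+1 n.+1) => i_lt.
    rewrite (bigD1 (Ordinal i_lt)) //= big1 ?addr0 => [|k ki].
      by rewrite !mxE eqxx mul1r.
    rewrite !mxE (_ : (i.+1 == k) = false) ?mul0r //.
    by apply: contraNF ki => /eqP e; apply/eqP/val_inj.
  rewrite (GP _).1; last by apply: leq_trans (ltn_ord j) i_lt.
  symmetry; apply: big1 => k _; rewrite !mxE.
  by rewrite (_ : (i.+1 == k) = false) ?mul0r // gtn_eqF // (leq_trans (ltn_ord k)).
by exists X; rewrite // conjumx // XG mulmxK.
Qed.

End ShiftSimilarity.

Lemma strictly_upper_similar_shift (F : fieldType) n (G : 'M[F]_n) :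
  strictly_upper G -> (forall i j : 'I_n, i.+1 = j -> G i j != 0) ->
  exists2 X : 'M[F]_n, X \in unitmx & conjmx X G = shift_mx n.
Proof.
case: n G => [|n] G G_upper G_superdiag.
  by exists 1%:M; rewrite ?unitmx1 //; apply/matrixP => -[].
exact: strictly_upper_similar_shift_succ.
Qed.

Definition companion {R : nzRingType} n (p : {poly R}) : 'M[R]_n :=
  \matrix_(i, j) if i == n.-1 :> nat then - p`_j else (i.+1 == j)%:R.

Lemma char_poly_companion (R : comNzRingType) n (p : {poly R}) :
  p \is monic -> size p = n.+1 -> char_poly (companion n p) = p.
Proof.
move=> p_monic /(congr1 predn) /= <-.
exact: companionmxK.
Qed.

(* With D = diag(e^i), (D C D^-1)_ij = e^(i-j) C_ij: the superdiagonal of C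
   becomes 1/e and its last row is damped by powers of e. *)
Lemma mxnorm_scaled_companion (R : realFieldType) n (p : {poly R}) (e : R) :
  0 < e <= 1 ->
  mxnorm (e *: conjmx (diag_mx (\row_(i < n) e ^+ i)) (companion n p) - shift_mx n)
    <= e * mxnorm (companion n p).
Proof.
case/andP=> e_gt0 e_le1; have e_neq0 : e != 0 by rewrite gt_eqF.
rewrite conjmx_diag => [|i]; last by rewrite mxE expf_neq0.
rewrite -[X in _ <= X * _](ger0_norm (ltW e_gt0)) -mxnormZ.
apply: ler_mxnorm => i j; rewrite !mxE.
have i_lt := ltn_ord i; have j_lt := ltn_ord j.
case: eqVneq => [i_last | _].
  have [k ->] : exists k, (i : nat) = (k + j)%N by exists (i - j)%N; lia.
  rewrite (_ : (k + j).+1 == j = false); last by apply/negbTE; lia.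
  rewrite subr0 exprD [_ * e ^+ j * _]mulrAC mulfK ?expf_neq0 // mulrA !normrM.
  rewrite -mulrA; apply: ler_wpM2l => //.
  rewrite ger0_norm ?exprn_ge0 ?(ltW e_gt0) //.
  by apply: ler_piMl => //; apply: exprn_ile1 => //; apply: ltW.
case: (i.+1 =P j) => [<-|_]; last by rewrite /= !(mulr0, mul0r) subr0.
by rewrite /= mulr1 exprSr mulrA invfM mulrA mulfK ?expf_neq0 // mulfV // subrr normr0.
Qed.

Lemma qual_class_conj_shift (R : realType) n (P : sign_pattern n) (A : 'M[R]_n) k :
  nowhere_zero P -> qual_class P A -> A ^+ k = 0 ->
  exists2 W : 'M[R]_n, W \in unitmx & qual_class P (conjmx W (shift_mx n)).
Proof.
move=> nzP qA Ak0; have [d d_gt0 near_A] := qual_class_open nzP qA.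
have [V Vu U_upper] := nilpotent_strictly_upper Ak0; set U := conjmx V A in U_upper.
have defA : conjmx (invmx V) U = A by rewrite conjmxK.
clearbody U.
have [m m_gt0 U_lbound] := nonzero_norm_lbound (fun ij => U ij.1 ij.2).
set K := conjmx (invmx V) (shift_mx n).
have [t [t_gt0 t_lt_m tK]] := exists_small_pos m_gt0 d_gt0 (mxnorm_ge0 K).
pose G := U + t *: shift_mx n.
have G_upper : strictly_upper G.
  move=> i j ji; rewrite !mxE U_upper // (_ : i.+1 == j = false) ?mulr0 ?addr0 //.
  by apply/negbTE; rewrite neq_ltn ltnS ji orbT.
have G_superdiag (i j : 'I_n) : i.+1 = j -> G i j != 0.
  move=> ij; rewrite !mxE ij eqxx mulr1.
  have [->|Uij] := eqVneq (U i j) 0; first by rewrite add0r gt_eqF.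
  have := U_lbound (i, j) Uij; rewrite /=; apply: contraTneq => /eqP.
  by rewrite addr_eq0 => /eqP ->; rewrite normrN gtr0_norm // -ltNge.
have [X Xu XG] := strictly_upper_similar_shift G_upper G_superdiag.
exists (invmx V *m invmx X); first by rewrite unitmx_mul !unitmx_inv Vu Xu.
rewrite conjuMumx ?unitmx_inv // -XG conjmxK // conjmxD conjmxZ defA.
by apply: near_A; rewrite addrAC subrr add0r mxnormZ gtr0_norm.
Qed.

Lemma spectrally_arbitrary_of_conj_shift (R : realType) n (P : sign_pattern n)
    (W : 'M[R]_n) :
  nowhere_zero P -> W \in unitmx -> qual_class P (conjmx W (shift_mx n)) ->
  spectrally_arbitrary R P.
Proof.
move=> nzP Wu qN p p_monic size_p; have [d d_gt0 near_N] := qual_class_open nzP qN.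
set C := companion n p; set c := mxnorm W * mxnorm C * mxnorm (invmx W).
have c_ge0 : 0 <= c by rewrite !mulr_ge0 ?mxnorm_ge0.
have [e [e_gt0 e_lt1 ec]] := exists_small_pos ltr01 d_gt0 c_ge0.
pose D := diag_mx (\row_(i < n) e ^+ i).
have Du : D \in unitmx.
  by rewrite unitmxE det_diag unitfE; apply/prodf_neq0 => i _; rewrite mxE expf_neq0 ?gt_eqF.
exists (conjmx (W *m D) C); split; last first.
  by rewrite char_poly_conjmx ?unitmx_mul ?Wu // char_poly_companion.
have e_neq0 : e != 0 by rewrite gt_eqF.
rewrite -[conjmx _ _]scale1r -(mulVf e_neq0) -scalerA.
apply: qual_classZ; first by rewrite invr_gt0.
apply: near_N; rewrite conjuMumx // -conjmxZ -conjmxB.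
apply: le_lt_trans (mxnorm_conjmx _ Wu) _; apply: le_lt_trans ec.
have -> : e * c = mxnorm W * (e * mxnorm C) * mxnorm (invmx W) by rewrite /c; ring.
rewrite ler_wpM2r ?mxnorm_ge0 // ler_wpM2l ?mxnorm_ge0 //.
by apply: mxnorm_scaled_companion; rewrite e_gt0 ltW.
Qed.

Theorem corollary5p7 (R : realType) (n : nat) (P : sign_pattern n) :
  nowhere_zero P ->
  (exists A : 'M[R]_n, qual_class P A /\ nilpotent_mx A) ->
  spectrally_arbitrary R P.
Proof.
move=> nzP [A [qA [k Ak0]]].
have [W Wu qN] := qual_class_conj_shift nzP qA Ak0.
exact: spectrally_arbitrary_of_conj_shift nzP Wu qN.
Qed.
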